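(* For all $y,k\in\mathbb N_0$: \begin{enumerate} \item $y+2k+\{3,4,6,7\}+4\cdot[0,k]\in\mathcal L(C_2^5)$; \item $y+2k+\{4,5,6,8,9\}+4\cdot[0,k]\in\mathcal L(C_2^5)$. \end{enumerate}
   Context: $C_2^r$ denotes an elementary abelian $2$-group of rank $r$; $[a,b]=\{x\in\mathbb Z:a\le x\le b\}$. For $L,L'\subset\mathbb Z$ and $y,k\in\mathbb Z$: $L+L'=\{a+b:a\in L,b\in L'\}$, $y+L=\{y\}+L$, and $k\cdot L=\{ka:a\in L\}$ (so $4\cdot[0,k]=\{0,4,\dots,4k\}$). For a subset $G_0$ of a finite abelian group $G$, a sequence over $G_0$ is an element of the free abelian monoid $\mathcal F(G_0)$ with basis $G_0$ (a finite unordered list of elements of $G_0$, repetitions allowed). $\mathcal B(G_0)$ is the monoid of zero-sum sequences over $G_0$ (including the empty sequence). An atom is a minimal zero-sum sequence, i.e. a nonempty zero-sum sequence that is not a product of two nonempty zero-sum sequences. For $B\in\mathcal B(G_0)$, $\mathsf L(B)=\{k\in\mathbb N_0: B \text{ is a product of } k \text{ atoms}\}$, and $\mathcal L(G_0)=\{\mathsf L(B):B\in\mathcal B(G_0)\}$; $\mathcal L(G)$ is the case $G_0=G$. *)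

From mathcomp Require Import all_boot all_algebra.
Set Implicit Arguments. Unset Strict Implicit. Unset Printing Implicit Defensive.
Import GRing.Theory.
Local Open Scope ring_scope.

Definition C2 (r : nat) := 'rV['F_2]_r.

Section Monoid.
Variable G : zmodType.

(* Sequences over G are finite lists, considered up to permutation
   (perm_eq); a sequence is zero-sum if its elements sum to 0. *)
Definition zero_sum (s : seq G) : Prop := \sum_(g <- s) g = 0.

Definition atom (s : seq G) : Prop :=
  s <> [::] /\ zero_sum s /\
  ~ (exists S T : seq G, S <> [::] /\ T <> [::] /\ zero_sum S /\ zero_sum T
                         /\ perm_eq s (S ++ T)).

Definition lengths (B : seq G) (k : nat) : Prop :=
  exists F : seq (seq G),
    size F = k /\ (forall A, A \in F -> atom A) /\ perm_eq B (flatten F).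

Definition in_system_of_sets (L : nat -> Prop) : Prop :=
  exists B : seq G, zero_sum B /\ forall n, L n <-> lengths B n.
End Monoid.

Definition shifted_set (y k : nat) (A : seq nat) (n : nat) : Prop :=
  exists a i, a \in A /\ (i <= k)%N /\ n = (y + 2 * k + a + 4 * i)%N.

From mathcomp Require Import all_boot all_algebra.
From mathcomp Require Import zify.
Set Implicit Arguments. Unset Strict Implicit. Unset Printing Implicit Defensive.
Import GRing.Theory.
Local Open Scope ring_scope.

(* Let e1, ..., e5 be the standard basis of C_2^5, e0 = e1 + ... + e5 and
   f = e1 + e2, and put P7 = {e0, ..., e5, f}, P8 = {0} u P7.  The only
   nonempty zero-sum subsets of P7 are U6 = {e0, ..., e5}, A3 = {e1, e2, f}
   and C5 = {e0, e3, e4, e5, f}, so the atoms over P8 are [0], the squares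
   g^2 (g in P7), U6, A3 and C5.  Hence for the sequence
     B = 0^y e0^(2k+2) (e1 e2)^(2k+2+2d) (e3 e4 e5)^(2k+2) f^2
   a factorisation is described by the numbers u, a, c of copies of U6, A3,
   C5 and the numbers of squares, which satisfy one parity equation for each
   element of P8; conversely every solution is realised by a factorisation.
   So L(B) is an explicit arithmetic set, equal to
   y + 2k + {3,4,6,7} + 4[0,k] for d = 0 and y + 2k + {4,5,6,8,9} + 4[0,k]
   for d = 1. *)

Definition vec5 (a0 a1 a2 a3 a4 : bool) : C2 5 :=
  \row_(j < 5) ((nth false [:: a0; a1; a2; a3; a4] j)%:R : 'F_2).
Arguments vec5 : simpl never.

Lemma F2_nat_inj (a b : bool) : ((a%:R : 'F_2) == b%:R) = (a == b).
Proof. by case: a; case: b; rewrite //= ?oner_eq0 // eq_sym oner_eq0. Qed.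

Lemma F2_natD (a b : bool) : (a%:R + b%:R : 'F_2) = (a (+) b)%:R.
Proof. by case: a; case: b; rewrite /= ?addr0 ?add0r //; apply/eqP. Qed.

Lemma vec5_eq a0 a1 a2 a3 a4 b0 b1 b2 b3 b4 :
  (vec5 a0 a1 a2 a3 a4 == vec5 b0 b1 b2 b3 b4) =
  [&& a0 == b0, a1 == b1, a2 == b2, a3 == b3 & a4 == b4].
Proof.
apply/eqP/idP => [/matrixP eq_ab | /and5P[/eqP-> /eqP-> /eqP-> /eqP-> /eqP->] //].
have coord (j : 'I_5) := eq_ab ord0 j.
move: (coord (@Ordinal 5 0 isT)) (coord (@Ordinal 5 1 isT)) (coord (@Ordinal 5 2 isT))
  (coord (@Ordinal 5 3 isT)) (coord (@Ordinal 5 4 isT)).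
rewrite /vec5 !mxE /= => /eqP c0 /eqP c1 /eqP c2 /eqP c3 /eqP c4.
by rewrite -!F2_nat_inj c0 c1 c2 c3 c4.
Qed.

Lemma vec5D a0 a1 a2 a3 a4 b0 b1 b2 b3 b4 :
  vec5 a0 a1 a2 a3 a4 + vec5 b0 b1 b2 b3 b4 =
  vec5 (a0 (+) b0) (a1 (+) b1) (a2 (+) b2) (a3 (+) b3) (a4 (+) b4).
Proof.
apply/matrixP=> i j; rewrite /vec5 !mxE F2_natD.
by case: j => [[|[|[|[|[|]]]]] ?].
Qed.

Lemma vec50 : vec5 false false false false false = 0.
Proof. by apply/matrixP=> i j; rewrite /vec5 !mxE; case: j => [[|[|[|[|[|]]]]] ?]. Qed.

Lemma C2_addxx (r : nat) (x : C2 r) : x + x = 0.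
Proof. by apply/matrixP=> i j; rewrite !mxE addrr_pchar2 // pchar_Fp. Qed.

Section ZeroSumSequences.
Variable G : zmodType.
Implicit Types (g : G) (s t S T A B : seq G).

Lemma zero_sum_perm s t : perm_eq s t -> zero_sum s -> zero_sum t.
Proof. by move=> st; rewrite /zero_sum (perm_big t st). Qed.

Lemma zero_sum_cat S T : zero_sum S -> zero_sum T -> zero_sum (S ++ T).
Proof. by rewrite /zero_sum big_cat /= => zS zT; rewrite zS zT addr0. Qed.

Lemma zero_sum_catr S T : zero_sum (S ++ T) -> zero_sum S -> zero_sum T.
Proof. by rewrite /zero_sum big_cat /= => zST zS; rewrite zS add0r in zST. Qed.

Lemma atom_split s S T : atom s -> perm_eq s (S ++ T) -> zero_sum S ->
  S = [::] \/ T = [::].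
Proof.
case=> _ [zs not_split] sST zS.
have zT : zero_sum T by apply: zero_sum_catr zS; apply: zero_sum_perm zs.
case: S sST zS => [|a S]; first by left.
case: T zT => [|b T]; first by right.
by move=> zT sST zS; case: not_split; exists (a :: S), (b :: T).
Qed.

Lemma atom_seq1 g : g = 0 -> atom [:: g].
Proof.
move=> g0; split=> //; split; first by rewrite /zero_sum big_seq1.
move=> [S [T [nS [nT [_ [_ /perm_size]]]]]]; rewrite size_cat.
by case: S nS => [|? ?] //; case: T nT => [|? ?] //= _ _; rewrite addnS.
Qed.

Lemma atom_square g : g != 0 -> g + g = 0 -> atom [:: g; g].
Proof.
move=> nz_g gg; split=> //; split; first by rewrite /zero_sum !big_cons big_nil addr0.
move=> [S [T [nS [nT [zS [_ gST]]]]]].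
have [x S_x] : exists x, S = [:: x].
  have := perm_size gST; rewrite size_cat.
  case: S {zS gST} nS => [|x [|? ?]] // _; first by exists x.
  by case: T nT => [|? ?] //= _; rewrite !addnS.
have : x \in [:: g; g] by rewrite (perm_mem gST) S_x mem_head.
rewrite !inE orbb => /eqP x_g; move: zS.
by rewrite S_x /zero_sum big_seq1 x_g => /eqP; rewrite (negbTE nz_g).
Qed.

Lemma lengths_perm B B' n : perm_eq B B' -> lengths B n -> lengths B' n.
Proof.
move=> BB' [F [sF [atF BF]]]; exists F; split=> //; split=> //.
by rewrite -(permPl BB').
Qed.

Lemma lengths_cat B B' n n' :
  lengths B n -> lengths B' n' -> lengths (B ++ B') (n + n').
Proof.
move=> [F [<- [atF BF]]] [F' [<- [atF' BF']]]; exists (F ++ F').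
split; first by rewrite size_cat.
split; first by move=> A; rewrite mem_cat => /orP[/atF|/atF'].
by rewrite flatten_cat; apply: perm_cat.
Qed.

Lemma lengths_power A m : atom A -> lengths (flatten (nseq m A)) m.
Proof.
move=> atA; exists (nseq m A); rewrite size_nseq; split=> //; split=> //.
by move=> A'; rewrite mem_nseq => /andP[_ /eqP->].
Qed.

Lemma lengths_zero_sum B n : lengths B n -> zero_sum B.
Proof.
move=> [F [_ [atF BF]]]; rewrite perm_sym in BF; apply: zero_sum_perm BF _.
elim: F atF => [|A F IH] atF; first by rewrite /zero_sum big_nil.
apply: zero_sum_cat; first by have [_ []] := atF A (mem_head _ _).
by apply: IH => A' A'F; apply: atF; rewrite inE A'F orbT.
Qed.

End ZeroSumSequences.

Lemma not_uniq_twice (T : eqType) (s : seq T) :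
  ~~ uniq s -> exists2 g, g \in s & g \in rem g s.
Proof.
elim: s => [|x s IH] //=; case: (boolP (x \in s)) => [xs _ | xNs /= /IH [g gs grem]].
  by exists x; rewrite ?mem_head //= eqxx.
exists g; first by rewrite inE gs orbT.
by case: ifP => _; rewrite ?gs // inE grem orbT.
Qed.

Lemma perm_on_support (T : eqType) (S s t : seq T) :
  {subset s <= S} -> {subset t <= S} ->
  {in S, forall x, count_mem x s = count_mem x t} -> perm_eq s t.
Proof.
move=> sS tS eq_count; apply/allP => x; rewrite mem_cat => x_st.
by apply/eqP/eq_count; case/orP: x_st => [/sS|/tS].
Qed.

Lemma count_flatten_nseq (T : Type) (p : pred T) (m : nat) (A : seq T) :
  count p (flatten (nseq m A)) = (m * count p A)%N.
Proof. by elim: m => //= m IH; rewrite count_cat IH mulSn. Qed.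

Lemma all_flatten_nseq (T : Type) (p : pred T) (m : nat) (A : seq T) :
  all p (flatten (nseq m A)) = (m == 0)%N || all p A.
Proof.
elim: m => //= m IH; rewrite all_cat IH {IH}.
by case: (all p A) => //=; case: m.
Qed.

Definition z  := vec5 false false false false false.
Definition e0 := vec5 true  true  true  true  true.
Definition e1 := vec5 true  false false false false.
Definition e2 := vec5 false true  false false false.
Definition e3 := vec5 false false true  false false.
Definition e4 := vec5 false false false true  false.
Definition e5 := vec5 false false false false true.
Definition f  := vec5 true  true  false false false.

Definition P7 := [:: e0; e1; e2; e3; e4; e5; f].
Definition P8 := z :: P7.

(* The three nonempty zero-sum subsets of P7, indexed by their size. *)
Definition U6 := [:: e0; e1; e2; e3; e4; e5].
Definition A3 := [:: e1; e2; f].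
Definition C5 := [:: e0; e3; e4; e5; f].

Ltac coordinates :=
  rewrite /U6 /A3 /C5 /=; rewrite /z /e0 /e1 /e2 /e3 /e4 /e5 /f ?inE ?vec5_eq /=.

Lemma z_eq0 : z = 0. Proof. exact: vec50. Qed.

Lemma P7_uniq : uniq P7.
Proof. by rewrite /P7; coordinates. Qed.

Lemma z_notin_P7 : z \notin P7.
Proof. by rewrite /P7; coordinates. Qed.

Lemma zero_sum_masks b0 b1 b2 b3 b4 b5 b6 :
  let s := mask [:: b0; b1; b2; b3; b4; b5; b6] P7 in
  zero_sum s -> s = [::] \/ s = U6 \/ s = A3 \/ s = C5.
Proof.
rewrite /zero_sum /P7.
case: b0; case: b1; case: b2; case: b3; case: b4; case: b5; case: b6;
  rewrite /= ?big_cons ?big_nil ?addr0; coordinates; rewrite ?vec5D /= -?vec50;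
  move=> /eqP; rewrite vec5_eq //= => _; tauto.
Qed.

Lemma zero_sum_subset_P7 (s : seq (C2 5)) :
  uniq s -> {subset s <= P7} -> zero_sum s ->
  s = [::] \/ perm_eq s U6 \/ perm_eq s A3 \/ perm_eq s C5.
Proof.
move=> s_uniq sP7 zs.
have s_mask : perm_eq s [seq x <- P7 | x \in s].
  apply: uniq_perm => //; first by rewrite filter_uniq // P7_uniq.
  by move=> x; rewrite mem_filter; case: (boolP (x \in s)) => // /sP7 ->.
rewrite filter_mask in s_mask.
case: (zero_sum_masks (zero_sum_perm s_mask zs)) => [|[|[|]]] e;
  rewrite e in s_mask; [left | right; left | right; right; left | right; right; right] => //.
by apply/nilP; rewrite /nilp (perm_size s_mask).
Qed.

Lemma zero_sum_subset_P7_size (s : seq (C2 5)) :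
  uniq s -> {subset s <= P7} -> zero_sum s -> s <> [::] ->
  (3 <= size s)%N /\ (size s = 3%N -> f \in s).
Proof.
move=> s_uniq sP7 zs s_nil.
case: (zero_sum_subset_P7 s_uniq sP7 zs) => [//|[s_perm|[s_perm|s_perm]]];
  by rewrite (perm_size s_perm) (perm_mem s_perm); coordinates.
Qed.

(* U6, A3 and C5 are atoms: a proper zero-sum factor would be one of them
   too, so there would be two disjoint factors of size 3, both containing f. *)
Lemma atom_U6_A3_C5 (t : seq (C2 5)) : t \in [:: U6; A3; C5] -> atom t.
Proof.
rewrite !inE => t_large.
have t_uniq : uniq t by case/or3P: t_large => /eqP->; coordinates.
have tP7 : {subset t <= P7}.
  by case/or3P: t_large => /eqP->; apply/allP; rewrite /P7; coordinates.
have zt : zero_sum t.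
  case/or3P: t_large => /eqP->;
  by rewrite /zero_sum !big_cons big_nil addr0; coordinates; rewrite !vec5D /= vec50.
have t_size : (size t <= 6)%N by case/or3P: t_large => /eqP->.
split; first by case/or3P: t_large => /eqP->.
split=> // -[S [T [nS [nT [zS [zT tST]]]]]].
move: t_uniq; rewrite (perm_uniq tST) cat_uniq => /and3P[S_uniq disjST T_uniq].
have SP7 : {subset S <= P7}.
  by move=> x xS; apply: tP7; rewrite (perm_mem tST) mem_cat xS.
have TP7 : {subset T <= P7}.
  by move=> x xT; apply: tP7; rewrite (perm_mem tST) mem_cat xT orbT.
have [S3 fS] := zero_sum_subset_P7_size S_uniq SP7 zS nS.
have [T3 fT] := zero_sum_subset_P7_size T_uniq TP7 zT nT.
have sizeST : (@size (C2 5) S + @size (C2 5) T <= 6)%N by rewrite -size_cat -(perm_size tST).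
have [/fS f_S /fT f_T] : @size (C2 5) S = 3%N /\ @size (C2 5) T = 3%N by lia.
by case/negP: disjST; apply/hasP; exists f.
Qed.

Lemma atom_square_P7 (g : C2 5) : g \in P7 -> atom [:: g; g].
Proof.
move=> gP7; apply: atom_square; last exact: C2_addxx.
by apply: contraNneq z_notin_P7 => g0; rewrite z_eq0 -g0.
Qed.

Lemma atom_P8_cases (s : seq (C2 5)) : atom s -> {subset s <= P8} ->
  perm_eq s [:: z] \/ (exists2 g, g \in P7 & perm_eq s [:: g; g]) \/
  perm_eq s U6 \/ perm_eq s A3 \/ perm_eq s C5.
Proof.
move=> s_atom sP8.
case: (boolP (z \in s)) => [zs | zNs].
  left; have s_z := perm_to_rem zs.
  have zz : zero_sum [:: z] by rewrite /zero_sum big_seq1 z_eq0.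
  by case: (atom_split (S := [:: z]) s_atom s_z zz) => // rem_nil; rewrite rem_nil in s_z.
have sP7 : {subset s <= P7}.
  move=> x xs; move: (sP8 x xs); rewrite inE => /predU1P[x_z|] //.
  by move: zNs; rewrite -x_z xs.
right; case: (boolP (uniq s)) => [s_uniq | /not_uniq_twice [g gs grem]].
  have [s_nil [zs _]] := s_atom.
  by case: (zero_sum_subset_P7 s_uniq sP7 zs) => [//|?]; right.
left; exists g; first exact: sP7.
have s_gg : perm_eq s ([:: g; g] ++ rem g (rem g s)).
  by apply: perm_trans (perm_to_rem gs) _; rewrite /= perm_cons perm_to_rem.
have zgg : zero_sum [:: g; g].
  by rewrite /zero_sum !big_cons big_nil addr0 C2_addxx.
by case: (atom_split s_atom s_gg zgg) => // rem_nil; rewrite rem_nil cats0 in s_gg.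
Qed.

Local Close Scope ring_scope.

Definition isU (s : seq (C2 5)) : nat := size s == 6.
Definition isA (s : seq (C2 5)) : nat := size s == 3.
Definition isC (s : seq (C2 5)) : nat := size s == 5.

Lemma atom_P8_invariants (A : seq (C2 5)) : atom A -> {subset A <= P8} ->
  size A + count_mem z A = 2 + 4 * isU A + isA A + 3 * isC A /\
  (exists m, count_mem e0 A = isU A + isC A + 2 * m) /\
  (exists m, count_mem e1 A = isU A + isA A + 2 * m) /\
  (exists m, count_mem f A = isA A + isC A + 2 * m).
Proof.
move=> A_atom AP8; rewrite /isU /isA /isC.
case: (atom_P8_cases A_atom AP8) => [|[[g gP7]|[|[|]]]] A_perm;
  rewrite (perm_size A_perm) !(permP A_perm);
  try by coordinates; split=> //; split; [|split]; exists 0.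
have gz : (g == z) = false by apply: contraNF z_notin_P7 => /eqP <-.
rewrite /= gz; split=> //; split; [|split];
  by [exists (g == e0) | exists (g == e1) | exists (g == f)]; case: (_ == _).
Qed.

Lemma sumn_affine (T : eqType) (F : seq T) (p q r s : T -> nat) :
  (forall A, A \in F -> p A = 2 + 4 * q A + r A + 3 * s A) ->
  sumn (map p F) =
  2 * size F + 4 * sumn (map q F) + sumn (map r F) + 3 * sumn (map s F).
Proof.
elim: F => [|A F IH] pF //=.
rewrite pF ?mem_head // IH; first lia.
by move=> B BF; apply: pF; rewrite inE BF orbT.
Qed.

Lemma sumn_parity (T : eqType) (F : seq T) (p q r : T -> nat) :
  (forall A, A \in F -> exists m, p A = q A + r A + 2 * m) ->
  exists m, sumn (map p F) = sumn (map q F) + sumn (map r F) + 2 * m.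
Proof.
elim: F => [|A F IH] pF /=; first by exists 0.
have [m pA] := pF A (mem_head _ _).
have [M pF'] : exists M, sumn (map p F) = sumn (map q F) + sumn (map r F) + 2 * M.
  by apply: IH => B BF; apply: pF; rewrite inE BF orbT.
by exists (m + M); rewrite pA pF'; lia.
Qed.

Lemma factorisation_invariants (B : seq (C2 5)) n : lengths B n -> {subset B <= P8} ->
  exists u a c m0 m1 mf,
    [/\ 2 * n + 4 * u + a + 3 * c = size B + count_mem z B,
        count_mem e0 B = u + c + 2 * m0,
        count_mem e1 B = u + a + 2 * m1 &
        count_mem f B = a + c + 2 * mf].
Proof.
move=> [F [<- [F_atoms B_F]]] BP8.
have FP8 A : A \in F -> {subset A <= P8}.
  by move=> AF x xA; apply: BP8; rewrite (perm_mem B_F); apply/flattenP; exists A.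
have inv A (AF : A \in F) := atom_P8_invariants (F_atoms A AF) (FP8 A AF).
have weight := sumn_affine (fun A AF => (inv A AF).1).
have [m0 par0] := sumn_parity (fun A AF => (inv A AF).2.1).
have [m1 par1] := sumn_parity (fun A AF => (inv A AF).2.2.1).
have [mf parf] := sumn_parity (fun A AF => (inv A AF).2.2.2).
exists (sumn (map isU F)), (sumn (map isA F)), (sumn (map isC F)), m0, m1, mf.
rewrite (perm_size B_F) !(permP B_F) size_flatten !count_flatten par0 par1 parf.
split=> //; rewrite -weight.
by elim: (F) => //= A F' ->; rewrite addnACA.
Qed.

Lemma P8_cases (P : C2 5 -> Prop) : P z -> P e0 -> P e1 -> P e2 -> P e3 ->
  P e4 -> P e5 -> P f -> {in P8, forall x, P x}.
Proof.
move=> Pz P0 P1 P2 P3 P4 P5 Pf x; rewrite !inE.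
by do 7!case/orP=> [/eqP->//|]; move/eqP->.
Qed.

Lemma lengths_of_counts (B : seq (C2 5)) y u a c m0 m1 m2 m3 m4 m5 mf n :
  {subset B <= P8} ->
  count_mem z B = y -> count_mem e0 B = u + c + 2 * m0 ->
  count_mem e1 B = u + a + 2 * m1 -> count_mem e2 B = u + a + 2 * m2 ->
  count_mem e3 B = u + c + 2 * m3 -> count_mem e4 B = u + c + 2 * m4 ->
  count_mem e5 B = u + c + 2 * m5 -> count_mem f B = a + c + 2 * mf ->
  n = y + u + a + c + m0 + m1 + m2 + m3 + m4 + m5 + mf -> lengths B n.
Proof.
move=> BP8 cz c0 c1 c2 c3 c4 c5 cf ->.
pose F := flatten (nseq y [:: z]) ++ flatten (nseq u U6) ++
  flatten (nseq a A3) ++ flatten (nseq c C5) ++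
  flatten (nseq m0 [:: e0; e0]) ++ flatten (nseq m1 [:: e1; e1]) ++
  flatten (nseq m2 [:: e2; e2]) ++ flatten (nseq m3 [:: e3; e3]) ++
  flatten (nseq m4 [:: e4; e4]) ++ flatten (nseq m5 [:: e5; e5]) ++
  flatten (nseq mf [:: f; f]).
have F_lengths :
    lengths F (y + (u + (a + (c + (m0 + (m1 + (m2 + (m3 + (m4 + (m5 + mf)))))))))).
  have square g m : g \in P7 -> lengths (flatten (nseq m [:: g; g])) m.
    by move=> gP7; apply/lengths_power/atom_square_P7.
  apply: lengths_cat; first exact/lengths_power/atom_seq1/z_eq0.
  do 3!(apply: lengths_cat; first by apply/lengths_power/atom_U6_A3_C5;
                                    rewrite !inE eqxx ?orbT).
  by do 6!(apply: lengths_cat; first by apply: square; rewrite /P7 !inE eqxx ?orbT);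
    apply: square; rewrite /P7 !inE eqxx ?orbT.
have FP8 : {subset F <= P8}.
  by apply/allP; rewrite !all_cat !all_flatten_nseq /P8 /P7; coordinates; rewrite !orbT.
rewrite !addnA in F_lengths; apply: lengths_perm F_lengths.
apply: perm_on_support FP8 BP8 _; apply: P8_cases;
  rewrite ?cz ?c0 ?c1 ?c2 ?c3 ?c4 ?c5 ?cf /F !count_cat !count_flatten_nseq;
  coordinates; lia.
Qed.

Definition block (y k d : nat) : seq (C2 5) :=
  nseq y z ++ nseq (2 * k + 2) e0 ++ nseq (2 * k + 2 + 2 * d) e1 ++
  nseq (2 * k + 2 + 2 * d) e2 ++ nseq (2 * k + 2) e3 ++ nseq (2 * k + 2) e4 ++
  nseq (2 * k + 2) e5 ++ nseq 2 f.

Lemma block_P8 y k d : {subset block y k d <= P8}.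
Proof.
by apply/allP; rewrite /block !all_cat !all_nseq /P8 /P7; coordinates; rewrite !orbT.
Qed.

Lemma block_count y k d (x : C2 5) :
  count_mem x (block y k d) =
  (z == x) * y + (e0 == x) * (2 * k + 2) + (e1 == x) * (2 * k + 2 + 2 * d) +
  (e2 == x) * (2 * k + 2 + 2 * d) + (e3 == x) * (2 * k + 2) +
  (e4 == x) * (2 * k + 2) + (e5 == x) * (2 * k + 2) + (f == x) * 2.
Proof. by rewrite /block !count_cat !count_nseq /= !addnA. Qed.

Lemma block_counts y k d :
  [/\ count_mem z (block y k d) = y,
      count_mem e0 (block y k d) = 2 * k + 2,
      count_mem e1 (block y k d) = 2 * k + 2 + 2 * d,
      count_mem e2 (block y k d) = 2 * k + 2 + 2 * d &
      [/\ count_mem e3 (block y k d) = 2 * k + 2,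
          count_mem e4 (block y k d) = 2 * k + 2,
          count_mem e5 (block y k d) = 2 * k + 2 &
          count_mem f (block y k d) = 2]].
Proof.
by rewrite !block_count; coordinates; rewrite !mul0n !mul1n ?addn0 ?add0n.
Qed.

(* The arithmetic description of L(block y k d): n is the length of a
   factorisation with u, a, c copies of U6, A3, C5 and m0 (resp. m1, mf)
   squares of each of e0, e3, e4, e5 (resp. e1, e2; f). *)
Definition block_length (y k d n : nat) : Prop :=
  exists u a c m0 m1 mf,
    [/\ 2 * k + 2 = u + c + 2 * m0, 2 * k + 2 + 2 * d = u + a + 2 * m1,
        2 = a + c + 2 * mf & n = y + u + a + c + 4 * m0 + 2 * m1 + mf].

Lemma block_lengthsP y k d n : lengths (block y k d) n <-> block_length y k d n.
Proof.
have [cz c0 c1 c2 [c3 c4 c5 cf]] := block_counts y k d.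
split=> [B_n | [u [a [c [m0 [m1 [mf [h0 h1 hf hn]]]]]]]].
  have [u [a [c [m0 [m1 [mf [weight p0 p1 pf]]]]]]] :=
    factorisation_invariants B_n (@block_P8 y k d).
  have size_B : size (block y k d) = y + 4 * (2 * k + 2) + 2 * (2 * k + 2 + 2 * d) + 2.
    by rewrite /block !size_cat !size_nseq; lia.
  exists u, a, c, m0, m1, mf; rewrite size_B cz in weight.
  by rewrite c0 in p0; rewrite c1 in p1; rewrite cf in pf; split; lia.
by apply: (lengths_of_counts (u := u) (a := a) (c := c) (m0 := m0) (m1 := m1)
  (m2 := m1) (m3 := m0) (m4 := m0) (m5 := m0) (mf := mf) (@block_P8 y k d) cz); lia.
Qed.

Lemma block_in_system (y k d : nat) (L : nat -> Prop) :
  (forall n, L n <-> block_length y k d n) -> in_system_of_sets (C2 5) L.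
Proof.
move=> L_block; exists (block y k d); split; last first.
  by move=> n; rewrite L_block block_lengthsP.
apply: (@lengths_zero_sum _ _ (y + 6 * k + 7 + 2 * d)); apply/block_lengthsP.
by exists 0, 0, 0, (k + 1), (k + 1 + d), 1; split; lia.
Qed.

(* The two arithmetic sets of the theorem: for d = 0 and d = 1 the lengths
   are y + 2k plus 3, 4, 6, 7 resp. 4, 5, 6, 8, 9 plus a multiple 4i, i <= k,
   the residue and i being read off from a, c and m0. *)
Lemma shifted_set_3467 y k n :
  shifted_set y k [:: 3; 4; 6; 7] n <-> block_length y k 0 n.
Proof.
split=> [[s [i [s_in [le_ik ->]]]] | [u [a [c [m0 [m1 [mf [h0 h1 hf ->]]]]]]]].
  move: s_in; rewrite !inE => /or4P[] /eqP->.
  - by exists (2 * (k - i) + 1), 1, 1, i, i, 0; split; lia.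
  - by exists (2 * (k - i)), 0, 2, i, (i + 1), 0; split; lia.
  - by exists (2 * (k - i)), 2, 0, (i + 1), i, 0; split; lia.
  - by exists (2 * (k - i)), 0, 0, (i + 1), (i + 1), 1; split; lia.
have [[ha hc]|[[ha hc]|[[ha hc]|[ha hc]]]] :
  (a = 0 /\ c = 0) \/ (a = 1 /\ c = 1) \/ (a = 2 /\ c = 0) \/ (a = 0 /\ c = 2) by lia.
- case: m0 h0 => [|m0] h0; first by exists 3, 0; rewrite !inE; split=> //; lia.
  by exists 7, m0; rewrite !inE; split=> //; lia.
- by exists 3, m0; rewrite !inE; split=> //; lia.
- by exists 6, (m0 - 1); rewrite !inE; split=> //; lia.
- by exists 4, m0; rewrite !inE; split=> //; lia.
Qed.

Lemma shifted_set_45689 y k n :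
  shifted_set y k [:: 4; 5; 6; 8; 9] n <-> block_length y k 1 n.
Proof.
split=> [[s [i [s_in [le_ik ->]]]] | [u [a [c [m0 [m1 [mf [h0 h1 hf ->]]]]]]]].
  move: s_in; rewrite !inE => /or4P[| | | /orP[]] /eqP->.
  - by exists (2 * (k + 1 - i)), 2, 0, i, i, 0; split; lia.
  - by exists (2 * (k - i) + 1), 1, 1, i, (i + 1), 0; split; lia.
  - by exists (2 * (k - i)), 0, 2, i, (i + 2), 0; split; lia.
  - by exists (2 * (k - i)), 2, 0, (i + 1), (i + 1), 0; split; lia.
  - by exists (2 * (k - i)), 0, 0, (i + 1), (i + 2), 1; split; lia.
have [[ha hc]|[[ha hc]|[[ha hc]|[ha hc]]]] :
  (a = 0 /\ c = 0) \/ (a = 1 /\ c = 1) \/ (a = 2 /\ c = 0) \/ (a = 0 /\ c = 2) by lia.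
- case: m0 h0 => [|m0] h0; first by exists 5, 0; rewrite !inE; split=> //; lia.
  by exists 9, m0; rewrite !inE; split=> //; lia.
- by exists 5, m0; rewrite !inE; split=> //; lia.
- case: m0 h0 => [|m0] h0; first by exists 4, 0; rewrite !inE; split=> //; lia.
  by exists 8, m0; rewrite !inE; split=> //; lia.
- by exists 6, m0; rewrite !inE; split=> //; lia.
Qed.

Theorem lemma3p8 (y k : nat) :
  in_system_of_sets (C2 5) (shifted_set y k [:: 3; 4; 6; 7]%N) /\
  in_system_of_sets (C2 5) (shifted_set y k [:: 4; 5; 6; 8; 9]%N).
Proof.
split; [apply: (@block_in_system y k 0) | apply: (@block_in_system y k 1)] => n.
- exact: shifted_set_3467.
- exact: shifted_set_45689.
Qed.
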